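(* Under the setting below, for any sequences generated by Algorithm BC (with arbitrary index selection) the following hold: (i) for every $k$, $\Phi^{\mathrm{FB}}_\Gamma(\bm x^{k+1})\le\Phi^{\mathrm{FB}}_\Gamma(\bm x^k)-\sum_{i\in I^{k+1}}\frac{\xi_i}{2\gamma_i}\|z_i^k-x_i^k\|^2$, where $\xi_i:=\frac{N-\gamma_iL_{f_i}}{N}>0$; (ii) $(\Phi^{\mathrm{FB}}_\Gamma(\bm x^k))_k$ is monotonically nonincreasing and converges to a finite value $\Phi_\star\ge\min\Phi$; (iii) $\Phi^{\mathrm{FB}}_\Gamma$ is constant, equal to $\Phi_\star$, on the set of accumulation points of $(\bm x^k)$; (iv) $\sum_k\|\bm x^{k+1}-\bm x^k\|^2<\infty$; (v) if $\Phi$ is coercive, then $(\bm x^k)$ and $(\bm z^k)$ are bounded.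
   Context: Setting: $N\ge1$, $n=\sum_{i=1}^N n_i$, $\bm x=(x_1,\dots,x_N)$ with $x_i\in\mathbb R^{n_i}$; $\Phi=F+G$ with $F(\bm x)=\frac1N\sum_i f_i(x_i)$, each $f_i:\mathbb R^{n_i}\to\mathbb R$ differentiable with $L_{f_i}$-Lipschitz gradient, $G:\mathbb R^n\to\mathbb R\cup\{+\infty\}$ proper lsc, $\arg\min\Phi\ne\emptyset$. $\gamma_i\in(0,N/L_{f_i})$, $\Gamma=\operatorname{blockdiag}(\gamma_1I_{n_1},\dots,\gamma_NI_{n_N})$, $\|x\|_V^2=\langle x,Vx\rangle$, $\operatorname{prox}_G^{V}(u)=\arg\min_w\{G(w)+\frac12\|w-u\|_V^2\}$, $\mathbf T(\bm x)=\operatorname{prox}_G^{\Gamma^{-1}}(\bm x-\Gamma\nabla F(\bm x))$. Forward-backward envelope: $\Phi^{\mathrm{FB}}_\Gamma(\bm x):=\inf_{\bm w}\{F(\bm x)+\langle\nabla F(\bm x),\bm w-\bm x\rangle+G(\bm w)+\frac12\|\bm w-\bm x\|^2_{\Gamma^{-1}}\}$. Algorithm BC: given $\bm x^0\in\mathbb R^n$, for $k=0,1,\dots$: pick $\bm z^k\in\mathbf T(\bm x^k)$; select a set of indices $I^{k+1}\subseteq[N]$; set $x_i^{k+1}=z_i^k$ for $i\in I^{k+1}$ and $x_i^{k+1}=x_i^k$ for $i\notin I^{k+1}$. *)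

From Stdlib Require Import Reals ClassicalEpsilon.
From mathcomp Require Import all_boot.
Set Implicit Arguments. Unset Strict Implicit. Unset Printing Implicit Defensive.

Local Open Scope R_scope.

Definition rsum (m : nat) (F : 'I_m -> R) : R := \big[Rplus/0]_(j < m) F j.

Definition vec (m : nat) := 'I_m -> R.
Definition ip (m : nat) (u v : vec m) : R := rsum (fun j => u j * v j).
Definition nsq (m : nat) (u : vec m) : R := ip u u.
Definition vsub (m : nat) (u v : vec m) : vec m := fun j => u j - v j.
Definition vscale (m : nat) (a : R) (u : vec m) : vec m := fun j => a * u j.
Definition vnorm (m : nat) (u : vec m) : R := sqrt (nsq u).

Definition bvec (N : nat) (n : 'I_N -> nat) := forall i : 'I_N, vec (n i).
Definition bsub (N : nat) (n : 'I_N -> nat) (x y : bvec n) : bvec n :=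
  fun i => vsub (x i) (y i).
Definition bnsq (N : nat) (n : 'I_N -> nat) (x : bvec n) : R :=
  rsum (fun i => nsq (x i)).
Definition bnorm (N : nat) (n : 'I_N -> nat) (x : bvec n) : R := sqrt (bnsq x).

Definition is_gradient (m : nat) (f : vec m -> R) (g : vec m -> vec m) : Prop :=
  forall x eps, 0 < eps -> exists delta, 0 < delta /\
    forall y, vnorm (vsub y x) < delta ->
      Rabs (f y - f x - ip (g x) (vsub y x)) <= eps * vnorm (vsub y x).

Definition lipschitz (m : nat) (g : vec m -> vec m) (L : R) : Prop :=
  forall x y, vnorm (vsub (g x) (g y)) <= L * vnorm (vsub x y).

(* extended reals R U {+oo}: None = +oo *)
Definition ext_add (r : R) (v : option R) : option R := option_map (Rplus r) v.
Definition ext_le (u v : option R) : Prop :=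
  match u, v with
  | _, None => True
  | None, Some _ => False
  | Some a, Some b => a <= b
  end.
Definition ext_gt (a : R) (v : option R) : Prop :=
  match v with None => True | Some b => a < b end.

Definition proper_fun (N : nat) (n : 'I_N -> nat) (G : bvec n -> option R) : Prop :=
  exists x, G x <> None.
Definition lsc (N : nat) (n : 'I_N -> nat) (G : bvec n -> option R) : Prop :=
  forall x a, ext_gt a (G x) -> exists delta, 0 < delta /\
    forall y, bnorm (bsub y x) < delta -> ext_gt a (G y).

Definition Fval (N : nat) (n : 'I_N -> nat) (f : forall i, vec (n i) -> R)
  (x : bvec n) : R := / INR N * rsum (fun i => f i (x i)).

Definition Phi (N : nat) (n : 'I_N -> nat) (f : forall i, vec (n i) -> R)
  (G : bvec n -> option R) (x : bvec n) : option R := ext_add (Fval f x) (G x).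

(* z in T(x) = prox_G^{Gamma^-1}(x - Gamma grad F(x)),
   block i of grad F(x) is (1/N) grad f_i(x_i) *)
Definition prox_obj (N : nat) (n : 'I_N -> nat)
  (gf : forall i, vec (n i) -> vec (n i)) (gamma : 'I_N -> R)
  (G : bvec n -> option R) (x w : bvec n) : option R :=
  ext_add (/ 2 * rsum (fun i => / gamma i *
      nsq (vsub (w i) (vsub (x i) (vscale (gamma i / INR N) (gf i (x i)))))))
    (G w).
Definition in_T (N : nat) (n : 'I_N -> nat)
  (gf : forall i, vec (n i) -> vec (n i)) (gamma : 'I_N -> R)
  (G : bvec n -> option R) (x z : bvec n) : Prop :=
  prox_obj gf gamma G x z <> None /\
  forall w, ext_le (prox_obj gf gamma G x z) (prox_obj gf gamma G x w).

(* infimum of a set of reals (classical choice; in the setting it always exists) *)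
Definition is_glb (P : R -> Prop) (m : R) : Prop :=
  (forall v, P v -> m <= v) /\ (forall b, (forall v, P v -> b <= v) -> b <= m).
Definition Rinf (P : R -> Prop) : R := epsilon (inhabits 0) (is_glb P).

Definition fbe_obj (N : nat) (n : 'I_N -> nat) (f : forall i, vec (n i) -> R)
  (gf : forall i, vec (n i) -> vec (n i)) (gamma : 'I_N -> R)
  (G : bvec n -> option R) (x w : bvec n) : option R :=
  ext_add (Fval f x
           + rsum (fun i => ip (vscale (/ INR N) (gf i (x i))) (vsub (w i) (x i)))
           + / 2 * rsum (fun i => / gamma i * nsq (vsub (w i) (x i))))
          (G w).
Definition FBE (N : nat) (n : 'I_N -> nat) (f : forall i, vec (n i) -> R)
  (gf : forall i, vec (n i) -> vec (n i)) (gamma : 'I_N -> R)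
  (G : bvec n -> option R) (x : bvec n) : R :=
  Rinf (fun v => exists w, fbe_obj f gf gamma G x w = Some v).

Definition cluster_point (N : nat) (n : 'I_N -> nat) (x : nat -> bvec n)
  (xb : bvec n) : Prop :=
  forall eps K, 0 < eps -> exists k, (K <= k)%nat /\ bnorm (bsub (x k) xb) < eps.

Definition coercive (N : nat) (n : 'I_N -> nat) (P : bvec n -> option R) : Prop :=
  forall M, exists r, forall x, r < bnorm x -> ext_gt M (P x).

(* The proof rests on one object, the forward-backward model
     M(x, w) = sum_i [ f_i(x_i)/N + <grad f_i(x_i)/N, w_i - x_i>
                       + |w_i - x_i|^2 / (2 gamma_i) ],
   so that FBE(x) = inf_w M(x, w) + G(w). *)
From Stdlib Require Import Reals Psatz ClassicalEpsilon FunctionalExtensionality Classical.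
From mathcomp Require Import all_boot.
From HB Require Import structures.

Set Implicit Arguments. Unset Strict Implicit.
Local Open Scope R_scope.

Lemma Rplus_assoc_law : associative Rplus. Proof. by move=> a b c; ring. Qed.
HB.instance Definition _ :=
  Monoid.isComLaw.Build R 0 Rplus Rplus_assoc_law Rplus_comm Rplus_0_l.

Section FiniteSums.
Variable m : nat.
Implicit Types F G : 'I_m -> R.

Lemma rsum_ext F G : (forall j, F j = G j) -> rsum F = rsum G.
Proof. by move=> h; rewrite /rsum; apply: eq_bigr => j _; exact: h. Qed.

Lemma rsum0 : rsum (fun _ : 'I_m => 0) = 0.
Proof. by rewrite /rsum; apply: (big_rec (fun a => a = 0)) => // *; subst; ring. Qed.

Lemma rsum_add F G : rsum (fun j => F j + G j) = rsum F + rsum G.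
Proof. by rewrite /rsum big_split. Qed.

Lemma rsum_scal c F : rsum (fun j => c * F j) = c * rsum F.
Proof.
rewrite /rsum; apply: (big_rec2 (fun a b => a = c * b)); first by rewrite Rmult_0_r.
by move=> j a b _ ->; ring.
Qed.

Lemma rsum_sub F G : rsum (fun j => F j - G j) = rsum F - rsum G.
Proof.
rewrite (rsum_ext (G := fun j => F j + -1 * G j)); last by move=> j; ring.
by rewrite rsum_add rsum_scal; ring.
Qed.

Lemma rsum_le F G : (forall j, F j <= G j) -> rsum F <= rsum G.
Proof.
move=> h; rewrite /rsum; apply: (big_rec2 (fun a b => a <= b)); first lra.
by move=> j a b _ hab; have := h j; lra.
Qed.

Lemma rsum_ge0 F : (forall j, 0 <= F j) -> 0 <= rsum F.
Proof. by move=> h; rewrite -rsum0; apply: rsum_le. Qed.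

Lemma rsum_abs F : Rabs (rsum F) <= rsum (fun j => Rabs (F j)).
Proof.
rewrite /rsum; apply: (big_rec2 (fun a b => Rabs a <= b)); first by rewrite Rabs_R0; lra.
by move=> j a b _ hab; have := Rabs_triang (F j) a; lra.
Qed.

Lemma rsum_term F j : (forall j, 0 <= F j) -> F j <= rsum F.
Proof.
move=> h; rewrite /rsum (bigD1 j) //=.
set rest := (X in _ + X).
have : 0 <= rest.
  apply: (big_rec (fun a => 0 <= a)); first lra.
  by move=> i a _ ha; have := h i; lra.
lra.
Qed.

(* For positive weights c_i on a nonempty index set, the harmonic-type constant
   1 / sum_i (1/c_i) is positive and below every c_i; it serves as a uniform
   lower bound min_i c_i. *)
Lemma harmonic_lower_bound (c : 'I_m -> R) (j0 : 'I_m) :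
  (forall j, 0 < c j) ->
  0 < / rsum (fun j => / c j) /\ forall j, / rsum (fun j => / c j) <= c j.
Proof.
move=> hc.
have hpos j : 0 < / c j by apply: Rinv_0_lt_compat.
have hle j : / c j <= rsum (fun j => / c j).
  exact: (@rsum_term (fun j => / c j) j (fun i => Rlt_le _ _ (hpos i))).
have hs : 0 < rsum (fun j => / c j) := Rlt_le_trans _ _ _ (hpos j0) (hle j0).
split; first exact: Rinv_0_lt_compat.
by move=> j; rewrite -(Rinv_inv (c j)); apply: Rinv_le_contravar.
Qed.

End FiniteSums.

Section Euclidean.
Variable m : nat.
Implicit Types u v w : vec m.

Lemma nsq_ge0 u : 0 <= nsq u.
Proof. by apply: rsum_ge0 => j; nra. Qed.

Lemma vnorm_ge0 u : 0 <= vnorm u.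
Proof. exact: sqrt_pos. Qed.

Lemma vnorm_sq u : vnorm u * vnorm u = nsq u.
Proof. by rewrite /vnorm sqrt_sqrt //; exact: nsq_ge0. Qed.

Lemma ip_scale_l c u v : ip (vscale c u) v = c * ip u v.
Proof. by rewrite /ip -rsum_scal; apply: rsum_ext => j; rewrite /vscale; ring. Qed.

Lemma ip_scale_r c u v : ip u (vscale c v) = c * ip u v.
Proof. by rewrite /ip -rsum_scal; apply: rsum_ext => j; rewrite /vscale; ring. Qed.

Lemma ip_sub_l u v w : ip (vsub u v) w = ip u w - ip v w.
Proof. by rewrite /ip -rsum_sub; apply: rsum_ext => j; rewrite /vsub; ring. Qed.

Lemma nsq_vsub0 u : nsq (vsub u u) = 0.
Proof. by rewrite /nsq /ip -(rsum0 m); apply: rsum_ext => j; rewrite /vsub; ring. Qed.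

Lemma ip_vsub0 g u : ip g (vsub u u) = 0.
Proof. by rewrite /ip -(rsum0 m); apply: rsum_ext => j; rewrite /vsub; ring. Qed.

Lemma vnorm_scale c u : vnorm (vscale c u) = Rabs c * vnorm u.
Proof.
have hsq : nsq (vscale c u) = c * c * nsq u.
  by rewrite /nsq /ip -rsum_scal; apply: rsum_ext => j; rewrite /vscale; ring.
by rewrite /vnorm hsq sqrt_mult_alt ?sqrt_Rsqr_abs //; nra.
Qed.

Lemma nsq_eq0 u : nsq u = 0 -> forall j, u j = 0.
Proof.
move=> h j.
have := @rsum_term m (fun j => u j * u j) j (fun j => ltac:(nra)).
by rewrite -/(ip u u) -/(nsq u) h => hj; nra.
Qed.

(* Squared Cauchy-Schwarz, from nonnegativity of |u + t v|^2 at the optimal t. *)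
Lemma ip_sq_le u v : ip u v * ip u v <= nsq u * nsq v.
Proof.
have hv := nsq_ge0 v.
case: (Req_dec (nsq v) 0) => h0.
  have -> : ip u v = 0.
    by rewrite /ip -(rsum0 m); apply: rsum_ext => j; rewrite (nsq_eq0 h0); ring.
  by rewrite h0; lra.
set t := - ip u v / nsq v.
have hquad : nsq (fun j => u j + t * v j) = nsq u + 2 * t * ip u v + t * t * nsq v.
  by rewrite /nsq /ip -!rsum_scal -!rsum_add; apply: rsum_ext => j; ring.
have hnn := nsq_ge0 (fun j => u j + t * v j); rewrite hquad in hnn.
have hp : 0 < nsq v by lra.
have hexpand : nsq u * nsq v - ip u v * ip u v
    = (nsq u + 2 * t * ip u v + t * t * nsq v) * nsq v by rewrite /t; field; lra.
have : 0 <= (nsq u + 2 * t * ip u v + t * t * nsq v) * nsq v by nra.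
lra.
Qed.

Lemma cauchy_schwarz u v : Rabs (ip u v) <= vnorm u * vnorm v.
Proof.
rewrite /vnorm -sqrt_mult; try exact: nsq_ge0.
by rewrite -sqrt_Rsqr_abs; apply: sqrt_le_1_alt; rewrite /Rsqr; exact: ip_sq_le.
Qed.

End Euclidean.

Definition xline m (x d : vec m) (t : R) : vec m := fun j => x j + t * d j.

Lemma quad_deriv A a t :
  derivable_pt_lim (fun t => t * A + a * t * t / 2) t (A + a * t).
Proof.
have -> : (fun t => t * A + a * t * t / 2) = (fun t => A * id t + (a / 2) * (id t * id t)).
  by apply: functional_extensionality => s; rewrite /id; field.
have -> : A + a * t = A * 1 + a / 2 * (1 * id t + id t * 1) by rewrite /id; field.
apply: derivable_pt_lim_plus; apply: derivable_pt_lim_scal.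
  exact: derivable_pt_lim_id.
by apply: derivable_pt_lim_mult; exact: derivable_pt_lim_id.
Qed.

Lemma line_deriv m (f : vec m -> R) g x d t :
  is_gradient f g ->
  derivable_pt_lim (fun t => f (xline x d t)) t (ip (g (xline x d t)) d).
Proof.
move=> hg eps he.
set p := xline x d t.
have hnd := vnorm_ge0 d.
have he' : 0 < eps / (vnorm d + 1) by apply: Rdiv_lt_0_compat; lra.
have [delta [hd hdel]] := hg p _ he'.
have hdp : 0 < delta / (vnorm d + 1) by apply: Rdiv_lt_0_compat; lra.
exists (mkposreal _ hdp) => h hh /= hlt.
have ev : vsub (xline x d (t + h)) p = vscale h d.
  by apply: functional_extensionality => j; rewrite /vsub /xline /vscale /p /xline; ring.
have hah : 0 < Rabs h by apply: Rabs_pos_lt.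
have hlt2 : Rabs h * (vnorm d + 1) < delta.
  move: hlt; rewrite /Rdiv => hlt.
  have := Rmult_lt_compat_r (vnorm d + 1) _ _ ltac:(lra) hlt.
  by rewrite Rmult_assoc Rinv_l; lra.
have := hdel (xline x d (t + h)).
rewrite ev vnorm_scale ip_scale_r => H.
have H2 := H ltac:(nra).
have -> : (f (xline x d (t + h)) - f (xline x d t)) / h - ip (g p) d
   = (f (xline x d (t + h)) - f p - h * ip (g p) d) / h by rewrite /p; field.
rewrite /Rdiv Rabs_mult Rabs_inv.
apply: (Rle_lt_trans _ (eps / (vnorm d + 1) * (Rabs h * vnorm d) * / Rabs h)).
  apply: Rmult_le_compat_r; last exact: H2.
  by apply: Rlt_le; apply: Rinv_0_lt_compat.
have -> : eps / (vnorm d + 1) * (Rabs h * vnorm d) * / Rabs h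
   = eps * (vnorm d / (vnorm d + 1)) by field; lra.
have : vnorm d / (vnorm d + 1) < 1.
  apply/(Rmult_lt_reg_r (vnorm d + 1)); first lra.
  by rewrite /Rdiv Rmult_assoc Rinv_l; lra.
nra.
Qed.

(* Mean value theorem for t |-> f(x + t(y-x)) - t <g x, y-x> - a t^2/2 on [0,1]:
   the linearisation error minus a/2 equals a gradient increment minus a c. *)
Lemma perturbed_mean_value m (f : vec m -> R) g x y a :
  is_gradient f g ->
  exists c, 0 < c < 1 /\
   f y - f x - ip (g x) (vsub y x) - a / 2
   = ip (vsub (g (xline x (vsub y x) c)) (g x)) (vsub y x) - a * c.
Proof.
move=> hg; set d := vsub y x.
set psi := fun t => f (xline x d t) - (t * ip (g x) d + a * t * t / 2).
have hd c : 0 <= c <= 1 -> derivable_pt_lim psi c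
      (ip (g (xline x d c)) d - (ip (g x) d + a * c)).
  by move=> _; apply: derivable_pt_lim_minus; [exact: line_deriv | exact: quad_deriv].
have [c [hc hc01]] := MVT_cor2 psi _ 0 1 Rlt_0_1 hd.
exists c; split => //.
have e1 : xline x d 1 = y.
  by apply: functional_extensionality => j; rewrite /xline /d /vsub; ring.
have e0 : xline x d 0 = x.
  by apply: functional_extensionality => j; rewrite /xline; ring.
by move: hc; rewrite /psi e1 e0 ip_sub_l; lra.
Qed.

(* Choosing
   a = +- L |y - x|^2 above makes the right-hand side of definite sign. *)
Lemma descent m (f : vec m -> R) g L x y :
  is_gradient f g -> lipschitz g L -> 0 <= L ->
  Rabs (f y - f x - ip (g x) (vsub y x)) <= L / 2 * nsq (vsub y x).
Proof.
move=> hg hL hL0; set d := vsub y x.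
have increment c : 0 < c < 1 ->
   Rabs (ip (vsub (g (xline x d c)) (g x)) d) <= L * c * nsq d.
  move=> hc; apply: (Rle_trans _ _ _ (cauchy_schwarz _ _)).
  have hl := hL (xline x d c) x.
  have ev : vsub (xline x d c) x = vscale c d.
    by apply: functional_extensionality => j; rewrite /vsub /xline /vscale; ring.
  rewrite ev vnorm_scale Rabs_right in hl; last lra.
  rewrite -vnorm_sq.
  have := vnorm_ge0 d; have := vnorm_ge0 (vsub (g (xline x d c)) (g x)); nra.
have [c1 [hc1 e1]] := perturbed_mean_value x y (L * nsq d) hg.
have [c2 [hc2 e2]] := perturbed_mean_value x y (- (L * nsq d)) hg.
have k1 := increment c1 hc1; have k2 := increment c2 hc2.
rewrite -/d in e1 e2.
have hn := nsq_ge0 d.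
set I1 := ip (vsub (g (xline x d c1)) (g x)) d in e1 k1.
set I2 := ip (vsub (g (xline x d c2)) (g x)) d in e2 k2.
have a1 := Rle_abs I1; have a2 := Rle_abs (- I2); rewrite Rabs_Ropp in a2.
apply: Rabs_le; split; nra.
Qed.

Lemma cv_lower_bound (u : nat -> R) a l : Un_cv u l -> (forall k, a <= u k) -> a <= l.
Proof.
move=> hc ha; apply: (Rle_cv_lim (Un := fun _ => a) ha _ hc).
by move=> e he; exists 0%nat => k _; rewrite /Rdist Rminus_diag Rabs_R0.
Qed.

Lemma telescoping_summable (u b : nat -> R) c lb :
  0 < c -> (forall k, 0 <= b k) -> (forall k, c * b k <= u k - u (S k)) ->
  (forall k, lb <= u k) -> exists l, infinite_sum b l.
Proof.
move=> hc hb hstep hlb.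
have hpartial m : c * sum_f_R0 b m <= u 0%nat - u (S m).
  elim: m => [|m IH] /=; first exact: hstep.
  by have := hstep (S m); lra.
have [l hl] : {l | Un_cv (sum_f_R0 b) l}; last by exists l.
apply: growing_cv.
- by move=> m /=; have := hb (S m); lra.
- exists ((u 0%nat - lb) / c) => y [m ->].
  apply/(Rmult_le_reg_l c) => //; rewrite /Rdiv; field_simplify; last lra.
  by have := hpartial m; have := hlb (S m); lra.
Qed.

Lemma glb_exists (P : R -> Prop) b v0 :
  P v0 -> (forall v, P v -> b <= v) -> exists m, is_glb P m.
Proof.
move=> hv0 hb.
set E := fun u => P (- u).
have hbound : bound E by exists (- b) => u hu; have := hb _ hu; lra.
have hne : exists u, E u by exists (- v0); rewrite /E Ropp_involutive.
have [m [hm1 hm2]] := completeness E hbound hne.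
exists (- m); split.
- move=> v hv; suff : - v <= m by lra.
  by apply: hm1; rewrite /E Ropp_involutive.
- move=> c hc; suff : m <= - c by lra.
  by apply: hm2 => u hu; have := hc _ hu; lra.
Qed.

Lemma Rinf_glb (P : R -> Prop) m : is_glb P m -> Rinf P = m.
Proof.
move=> [h1 h1']; have [h2 h2'] : is_glb P (Rinf P).
  by rewrite /Rinf; apply: epsilon_spec; exists m.
by apply: Rle_antisym; [apply: h1' | apply: h2'].
Qed.

Section BlockVectors.
Variables (N : nat) (n : 'I_N -> nat).
Implicit Types y a b c : bvec n.

Lemma bnsq_ge0 y : 0 <= bnsq y.
Proof. by apply: rsum_ge0 => i; exact: nsq_ge0. Qed.

Lemma bnorm_ge0 y : 0 <= bnorm y.
Proof. exact: sqrt_pos. Qed.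

Lemma bnorm_sq y : bnorm y * bnorm y = bnsq y.
Proof. by rewrite /bnorm sqrt_sqrt //; exact: bnsq_ge0. Qed.

Lemma nsq_le_bnsq y i : nsq (y i) <= bnsq y.
Proof. by apply: (@rsum_term N (fun i => nsq (y i))) => j; exact: nsq_ge0. Qed.

Lemma vnorm_le_bnorm y i : vnorm (y i) <= bnorm y.
Proof. by apply: sqrt_le_1_alt; exact: nsq_le_bnsq. Qed.

Lemma bnsq_tri a b c : bnsq (bsub a c) <= 2 * bnsq (bsub a b) + 2 * bnsq (bsub b c).
Proof.
rewrite /bnsq -!rsum_scal -rsum_add; apply: rsum_le => i.
rewrite /bsub /nsq /ip -!rsum_scal -rsum_add; apply: rsum_le => j.
by rewrite /vsub; have := Rle_0_sqr (a i j - 2 * b i j + c i j); rewrite /Rsqr; nra.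
Qed.

End BlockVectors.

Lemma Rabs_le_bounds u v : Rabs u <= v -> - v <= u <= v.
Proof. by move=> h; have := Rle_abs u; have := Rle_abs (- u); rewrite Rabs_Ropp; lra. Qed.

Section Model.
Local Unset Implicit Arguments.
Variables (N : nat) (n : 'I_N -> nat).
Variables (f : forall i, vec (n i) -> R) (gf : forall i, vec (n i) -> vec (n i)).
Variables (L gamma : 'I_N -> R) (G : bvec n -> option R).
Hypothesis hN : (1 <= N)%nat.
Hypothesis hgrad : forall i, is_gradient (f i) (gf i).
Hypothesis hL : forall i, 0 < L i.
Hypothesis hlip : forall i, lipschitz (gf i) (L i).
Hypothesis hgam : forall i, 0 < gamma i /\ gamma i < INR N / L i.
Local Set Implicit Arguments.

Local Notation fbe := (FBE f gf gamma G).

Lemma INR_N_pos : 0 < INR N.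
Proof. by apply: lt_0_INR; apply/ltP. Qed.

Definition xi (i : 'I_N) : R := (INR N - gamma i * L i) / INR N.

Definition dec_coef (i : 'I_N) : R := xi i / (2 * gamma i).

Lemma xi_pos i : 0 < xi i.
Proof.
have hn := INR_N_pos; have [g1 g2] := hgam i; have hl := hL i.
apply: Rdiv_lt_0_compat => //.
have : gamma i * L i < INR N / L i * L i by apply: Rmult_lt_compat_r.
by rewrite /Rdiv Rmult_assoc Rinv_l; lra.
Qed.

Lemma dec_coef_pos i : 0 < dec_coef i.
Proof. by have [g1 _] := hgam i; apply: Rdiv_lt_0_compat; [exact: xi_pos | lra]. Qed.

Definition model_block (x w : bvec n) (i : 'I_N) : R :=
  / INR N * f i (x i) + ip (vscale (/ INR N) (gf i (x i))) (vsub (w i) (x i))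
  + / 2 * (/ gamma i * nsq (vsub (w i) (x i))).

Definition model (x w : bvec n) : R := rsum (model_block x w).

Definition prox_quad (x w : bvec n) : R := / 2 * rsum (fun i => / gamma i *
  nsq (vsub (w i) (vsub (x i) (vscale (gamma i / INR N) (gf i (x i)))))).

(* Completing the square: M(x, w) - prox_quad(x, w) depends on x only. *)
Definition model_shift (x : bvec n) : R := Fval f x
  - / 2 * rsum (fun i => / gamma i * nsq (vscale (gamma i / INR N) (gf i (x i)))).

Lemma fbe_obj_model x w : fbe_obj f gf gamma G x w = ext_add (model x w) (G w).
Proof. by rewrite /fbe_obj /model /model_block !rsum_add !rsum_scal /Fval -!rsum_scal. Qed.

Lemma model_prox_quad x w : model x w = prox_quad x w + model_shift x.
Proof.
have hn := INR_N_pos.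
have block i : model_block x w i = / 2 * (/ gamma i *
      nsq (vsub (w i) (vsub (x i) (vscale (gamma i / INR N) (gf i (x i))))))
   + (/ INR N * f i (x i)
      - / 2 * (/ gamma i * nsq (vscale (gamma i / INR N) (gf i (x i))))).
  have [g1 _] := hgam i.
  rewrite /model_block /nsq /ip -!rsum_scal.
  have regroup (a b c d e : R) : a + b + c = d + (a - e) <-> b + c + e - d = 0.
    by split => *; lra.
  apply/regroup.
  rewrite -!rsum_add -rsum_sub -(rsum0 (n i)); apply: rsum_ext => j.
  by rewrite /vsub /vscale; field; lra.
by rewrite /model (rsum_ext block) rsum_add /prox_quad /model_shift /Fval rsum_sub -!rsum_scal.
Qed.

(* Descent lemma, blockwise: each block of the model dominates f_i(w_i)/N with
   a quadratic margin dec_coef i * |w_i - x_i|^2. *)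
Lemma model_block_lb x w i :
  / INR N * f i (w i) + dec_coef i * nsq (vsub (w i) (x i)) <= model_block x w i.
Proof.
have hn := INR_N_pos; have [g1 g2] := hgam i; have hl := hL i.
have hd := descent (x i) (w i) (hgrad i) (hlip i) (Rlt_le _ _ hl).
have hd2 := Rle_abs (f i (w i) - f i (x i) - ip (gf i (x i)) (vsub (w i) (x i))).
rewrite /model_block ip_scale_l /dec_coef /xi.
set A := nsq _ in hd hd2 *; set B := ip _ _ in hd hd2 *.
have -> : (INR N - gamma i * L i) / INR N / (2 * gamma i) * A
   = / INR N * (- (L i / 2 * A)) + / 2 * (/ gamma i * A) by field; lra.
have hiN : 0 < / INR N by apply: Rinv_0_lt_compat.
have : / INR N * (f i (w i) - f i (x i) - B) <= / INR N * (L i / 2 * A).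
  by apply: Rmult_le_compat_l; lra.
lra.
Qed.

Lemma model_block_same x w i : x i = w i -> model_block x w i = / INR N * f i (w i).
Proof. by move=> h; rewrite /model_block h nsq_vsub0 ip_vsub0; ring. Qed.

Definition cmin : R := / rsum (fun i => / dec_coef i).

Lemma cmin_pos : 0 < cmin.
Proof. exact: (harmonic_lower_bound (Ordinal hN) dec_coef_pos).1. Qed.

Lemma cmin_le i : cmin <= dec_coef i.
Proof. exact: (harmonic_lower_bound (Ordinal hN) dec_coef_pos).2. Qed.

Lemma model_lb x w : Fval f w + cmin * bnsq (bsub w x) <= model x w.
Proof.
apply: (Rle_trans _ (rsum (fun i => / INR N * f i (w i) +
                                 dec_coef i * nsq (vsub (w i) (x i))))).
  rewrite rsum_add /Fval rsum_scal; apply: Rplus_le_compat_l.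
  rewrite /bnsq -rsum_scal; apply: rsum_le => i; have := cmin_le i; have := nsq_ge0 (vsub (w i) (x i)).
  by rewrite /bsub; nra.
by apply: rsum_le => i; exact: model_block_lb.
Qed.

Lemma Fval_le_model x w : Fval f w <= model x w.
Proof. by have := model_lb x w; have := cmin_pos; have := bnsq_ge0 (bsub w x); nra. Qed.

(* Every point of T(x) minimizes M(x, .) + G (the two objectives differ by a
   constant), so it attains the infimum defining the envelope. *)
Lemma FBE_at_prox x z : in_T gf gamma G x z -> exists gz, G z = Some gz /\
  fbe x = model x z + gz /\
  forall w gw, G w = Some gw -> model x z + gz <= model x w + gw.
Proof.
case=> hne hle; rewrite /prox_obj -/(prox_quad x z) in hne.
case hz: (G z) hne => [gz|] // _.
have hmin w gw : G w = Some gw -> model x z + gz <= model x w + gw.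
  move=> hw; have := hle w.
  by rewrite /prox_obj -/(prox_quad x z) -/(prox_quad x w) hz hw /= !model_prox_quad; lra.
exists gz; split => //; split => //.
rewrite /FBE; apply: Rinf_glb; split.
- move=> v [w]; rewrite fbe_obj_model.
  by case hw: (G w) => [gw|] // [<-]; exact: hmin.
- by move=> b hb; apply: hb; exists z; rewrite fbe_obj_model hz.
Qed.

Lemma model_block_diff (x xb w : bvec n) i :
  let a := vsub (x i) (xb i) in let b := vsub (w i) (xb i) in
  let dg := vsub (gf i (x i)) (gf i (xb i)) in
  model_block x w i - model_block xb w i
  = / INR N * (f i (x i) - f i (xb i) - ip (gf i (xb i)) a)
    + / INR N * (ip dg b - ip dg a) + / 2 * / gamma i * (nsq a - 2 * ip a b).
Proof.
move=> a b dg; rewrite /model_block !ip_scale_l.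
suff E : / INR N * ip (gf i (x i)) (vsub (w i) (x i))
   + / 2 * (/ gamma i * nsq (vsub (w i) (x i)))
   - / INR N * ip (gf i (xb i)) (vsub (w i) (xb i))
   - / 2 * (/ gamma i * nsq (vsub (w i) (xb i)))
   + / INR N * ip (gf i (xb i)) a
   - / INR N * ip dg b + / INR N * ip dg a
   - / 2 * (/ gamma i * nsq a) + / 2 * (/ gamma i * (2 * ip a b)) = 0 by lra.
rewrite /a /b /dg /nsq /ip -!rsum_scal.
do 6 rewrite -?rsum_add -?rsum_sub.
by rewrite -(rsum0 (n i)); apply: rsum_ext => j; rewrite /vsub; ring.
Qed.

(* Local Lipschitz-type bound on that change, with s = |x_i - xb_i| and
   r = |w_i - xb_i|: descent lemma, Lipschitz gradient and Cauchy-Schwarz. *)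
Lemma model_block_diff_bound (x xb w : bvec n) i :
  let s := vnorm (vsub (x i) (xb i)) in let r := vnorm (vsub (w i) (xb i)) in
  Rabs (model_block x w i - model_block xb w i)
  <= (L i / INR N * (3 / 2 * s + r) + / (2 * gamma i) * (s + 2 * r)) * s.
Proof.
move=> s r; rewrite model_block_diff.
set a := vsub (x i) (xb i); set b := vsub (w i) (xb i).
set dg := vsub (gf i (x i)) (gf i (xb i)).
have hn := INR_N_pos; have [g1 _] := hgam i; have hl := hL i.
have hs : 0 <= s := vnorm_ge0 _; have hr : 0 <= r := vnorm_ge0 _.
have hss : nsq a = s * s by rewrite -vnorm_sq.
have lin_err : Rabs (f i (x i) - f i (xb i) - ip (gf i (xb i)) a) <= L i / 2 * (s * s).
  by rewrite -hss; exact: descent (hgrad i) (hlip i) (Rlt_le _ _ hl).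
have hdg : vnorm dg <= L i * s := hlip i (x i) (xb i).
have grad_terms : Rabs (ip dg b - ip dg a) <= L i * s * r + L i * s * s.
  apply: (Rle_trans _ _ _ (Rabs_triang _ _)); rewrite Rabs_Ropp.
  have := cauchy_schwarz dg b; have := cauchy_schwarz dg a; rewrite -/s -/r.
  have := vnorm_ge0 dg; nra.
have quad_terms : Rabs (nsq a - 2 * ip a b) <= s * s + 2 * s * r.
  apply: (Rle_trans _ _ _ (Rabs_triang _ _)); rewrite Rabs_Ropp Rabs_mult Rabs_right hss; last nra.
  by have := cauchy_schwarz a b; rewrite (Rabs_right 2) -/s -/r; lra.
have hiN : 0 < / INR N by apply: Rinv_0_lt_compat.
have hig : 0 < / 2 * / gamma i by have := Rinv_0_lt_compat _ g1; lra.
have -> : / (2 * gamma i) = / 2 * / gamma i by field; lra.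
apply: (Rle_trans _ _ _ (Rabs_triang _ _)); rewrite Rabs_mult (Rabs_right (/ 2 * / gamma i)); last lra.
rewrite -Rmult_plus_distr_l Rabs_mult (Rabs_right (/ INR N)); last lra.
have := Rabs_triang (f i (x i) - f i (xb i) - ip (gf i (xb i)) a) (ip dg b - ip dg a).
move=> htri.
have h1 := Rmult_le_compat_l (/ INR N) _ _ (Rlt_le _ _ hiN) (Rle_trans _ _ _ htri
  (Rplus_le_compat _ _ _ _ lin_err grad_terms)).
have h2 := Rmult_le_compat_l (/ 2 * / gamma i) _ _ (Rlt_le _ _ hig) quad_terms.
have -> : L i / INR N = / INR N * L i by rewrite /Rdiv Rmult_comm.
lra.
Qed.

Lemma model_cont xb R0 eps : 0 <= R0 -> 0 < eps -> exists d, 0 < d /\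
  forall x w, bnorm (bsub x xb) < d -> bnsq (bsub w xb) <= R0 ->
  Rabs (model x w - model xb w) <= eps.
Proof.
move=> hR0 he.
set rho := sqrt R0; have hrho : 0 <= rho := sqrt_pos _.
have hn := INR_N_pos.
set K := fun i => L i / INR N * (3 / 2 + rho) + / (2 * gamma i) * (1 + 2 * rho).
have hK i : 0 <= K i.
  have [g1 _] := hgam i; have := hL i => hl.
  have : 0 <= L i / INR N by apply: Rlt_le; apply: Rdiv_lt_0_compat.
  have : 0 < / (2 * gamma i) by apply: Rinv_0_lt_compat; lra.
  by rewrite /K; nra.
set Kt := rsum K; have hKt : 0 <= Kt by apply: rsum_ge0.
set t := eps / (Kt + 1); have ht : 0 < t by apply: Rdiv_lt_0_compat; lra.
exists (Rmin 1 t); split; first by apply: Rmin_pos; lra.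
move=> x w hx hw.
set S := bnorm (bsub x xb) in hx.
have hS1 : S <= 1 by have := Rmin_l 1 t; lra.
have hSt : S <= t by have := Rmin_r 1 t; lra.
have block i : Rabs (model_block x w i - model_block xb w i) <= K i * S.
  apply: (Rle_trans _ _ _ (model_block_diff_bound x xb w i)).
  rewrite /K; set s := vnorm (vsub (x i) (xb i)); set r := vnorm (vsub (w i) (xb i)).
  have hs : 0 <= s := vnorm_ge0 _; have hr : 0 <= r := vnorm_ge0 _.
  have hsS : s <= S := vnorm_le_bnorm (bsub x xb) i.
  have hrr : r <= rho := Rle_trans _ _ _ (vnorm_le_bnorm (bsub w xb) i) (sqrt_le_1_alt _ _ hw).
  have [g1 _] := hgam i; have hl := hL i.
  have ha : 0 <= L i / INR N by apply: Rlt_le; apply: Rdiv_lt_0_compat.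
  have hc : 0 < / (2 * gamma i) by apply: Rinv_0_lt_compat; lra.
  apply: Rmult_le_compat => //; first by nra.
  have : s <= 1 by lra.
  nra.
rewrite /model -rsum_sub.
apply: (Rle_trans _ _ _ (rsum_abs _)).
apply: (Rle_trans _ (rsum (fun i => S * K i))).
  by apply: rsum_le => i; rewrite Rmult_comm; exact: block.
rewrite rsum_scal -/Kt.
have htK : t * (Kt + 1) = eps by rewrite /t; field; lra.
have : S * Kt <= t * Kt by apply: Rmult_le_compat_r.
lra.
Qed.

Section Iterates.
Local Unset Implicit Arguments.
Variables (x z : nat -> bvec n) (I : nat -> {set 'I_N}).
Hypothesis hT : forall k, in_T gf gamma G (x k) (z k).
Hypothesis hupd : forall k i, x (S k) i = if i \in I (S k) then z k i else x k i.
Local Set Implicit Arguments.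

Definition dec_sum (k : nat) : R :=
  \big[Rplus/0]_(i < N | i \in I (S k)) (dec_coef i * nsq (vsub (z k i) (x k i))).

(* FBE(x^{k+1}) <= M(x^{k+1}, z^k) + G(z^k); blockwise,
   M(x^{k+1}, z^k) is f_i(z_i^k)/N on updated blocks, which the descent bound
   compares with M(x^k, z^k), and coincides with M(x^k, z^k) elsewhere. *)
Lemma sufficient_decrease k : fbe (x (S k)) <= fbe (x k) - dec_sum k.
Proof.
have [gz [hgz [hUk _]]] := FBE_at_prox (hT k).
have [gz' [_ [hUk1 hmin1]]] := FBE_at_prox (hT (S k)).
have := hmin1 (z k) gz hgz; rewrite hUk1 hUk.
suff : model (x (S k)) (z k) <= model (x k) (z k) - dec_sum k by lra.
have -> : dec_sum k = rsum (fun i =>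
    if i \in I (S k) then dec_coef i * nsq (vsub (z k i) (x k i)) else 0).
  by rewrite /dec_sum /rsum big_mkcond.
rewrite /model -rsum_sub; apply: rsum_le => i.
case hi: (i \in I (S k)).
- rewrite (@model_block_same (x (S k)) (z k) i); last by rewrite hupd hi.
  by have := model_block_lb (x k) (z k) i; lra.
- by rewrite /model_block hupd hi; lra.
Qed.

Lemma dec_sum_ge0 k : 0 <= dec_sum k.
Proof.
rewrite /dec_sum; apply: (big_rec (fun a => 0 <= a)); first lra.
by move=> i a _ ha; have := dec_coef_pos i; have := nsq_ge0 (vsub (z k i) (x k i)); nra.
Qed.

Lemma FBE_nonincreasing : Un_decreasing (fun k => fbe (x k)).
Proof. by move=> k /=; have := sufficient_decrease k; have := dec_sum_ge0 k; lra. Qed.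

(* Only the updated blocks move, each by |z_i^k - x_i^k|, so the squared step
   length is controlled by the certified decrease. *)
Lemma step_sq_le k : cmin * bnsq (bsub (x (S k)) (x k)) <= fbe (x k) - fbe (x (S k)).
Proof.
suff : cmin * bnsq (bsub (x (S k)) (x k)) <= dec_sum k.
  by have := sufficient_decrease k; lra.
have -> : bnsq (bsub (x (S k)) (x k))
    = \big[Rplus/0]_(i < N | i \in I (S k)) nsq (vsub (z k i) (x k i)).
  rewrite /bnsq /rsum [RHS]big_mkcond /=; apply: eq_bigr => i _.
  by rewrite /bsub hupd; case: ifP => _ //; exact: nsq_vsub0.
rewrite /dec_sum; apply: (big_rec2 (fun a b => cmin * a <= b)); first lra.
by move=> i a b _ hab; have := cmin_le i; have := nsq_ge0 (vsub (z k i) (x k i)); nra.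
Qed.

(* Any minimum value r of Phi is below every FBE(x^k), since
   FBE(x^k) = M(x^k, z^k) + G(z^k) >= Phi(z^k) >= r; hence below the limit. *)
Lemma FBE_limit_ge_min xs r l : (forall y, ext_le (Phi f G xs) (Phi f G y)) ->
  Phi f G xs = Some r -> Un_cv (fun k => fbe (x k)) l -> r <= l.
Proof.
move=> hmin hr hcv; apply: (cv_lower_bound hcv) => k.
have [gz [hgz [hUk _]]] := FBE_at_prox (hT k).
have := hmin (z k); rewrite hr /Phi hgz /= => h.
by rewrite hUk; have := Fval_le_model (x k) (z k); lra.
Qed.

(* Statement (v): FBE(x^k) <= FBE(x^0) bounds Phi(z^k), so coercivity confines
   the z^k to a ball; each block of x^k is either x_i^0 or some z_i^j. *)
Lemma iterates_bounded : coercive (Phi f G) ->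
  (exists B, forall k, bnorm (x k) <= B) /\ (exists B, forall k, bnorm (z k) <= B).
Proof.
move=> hco; have [rr hrr] := hco (fbe (x 0%nat)).
have hz k : bnorm (z k) <= rr.
  apply: Rnot_lt_le => hlt; have := hrr _ hlt.
  have [gz [hgz [hUk _]]] := FBE_at_prox (hT k).
  rewrite /Phi hgz /= => h.
  have := Fval_le_model (x k) (z k).
  have := decreasing_prop _ _ _ FBE_nonincreasing (Nat.le_0_l k) => /=.
  by rewrite hUk; lra.
split; last by exists rr.
exists (sqrt (rsum (fun i => nsq (x 0%nat i) + rr * rr))).
have hx k i : nsq (x k i) <= nsq (x 0%nat i) + rr * rr.
  elim: k => [|k IH]; first by have := Rle_0_sqr rr; rewrite /Rsqr; lra.
  rewrite hupd; case: ifP => _ //.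
  have := nsq_le_bnsq (z k) i; have := bnorm_sq (z k); have := hz k.
  by have := bnorm_ge0 (z k); have := nsq_ge0 (x 0%nat i); nra.
by move=> k; apply: sqrt_le_1_alt; apply: rsum_le => i; exact: hx.
Qed.

Section BoundedBelow.
Variables (xs : bvec n) (r0 : R).
Hypothesis hxs : Phi f G xs = Some r0.
Hypothesis hmin : forall y, ext_le (Phi f G xs) (Phi f G y).

Lemma model_obj_lb x0 w gw : G w = Some gw -> r0 + cmin * bnsq (bsub w x0) <= model x0 w + gw.
Proof. by move=> hw; have := hmin w; rewrite hxs /Phi hw /=; have := model_lb x0 w; lra. Qed.

Lemma FBE_glb x0 : is_glb (fun v => exists w, fbe_obj f gf gamma G x0 w = Some v) (fbe x0).
Proof.
have [gxs hgxs] : exists g, G xs = Some g.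
  by move: hxs; rewrite /Phi; case: (G xs) => [g|] // _; exists g.
have hv0 : exists w, fbe_obj f gf gamma G x0 w = Some (model x0 xs + gxs).
  by exists xs; rewrite fbe_obj_model hgxs.
have hb v : (exists w, fbe_obj f gf gamma G x0 w = Some v) -> r0 <= v.
  move=> [w]; rewrite fbe_obj_model; case hw: (G w) => [gw|] // [<-].
  by have := model_obj_lb x0 hw; have := cmin_pos; have := bnsq_ge0 (bsub w x0); nra.
have [m hm] := glb_exists hv0 hb.
by rewrite /FBE (Rinf_glb hm).
Qed.

Lemma FBE_le x0 w gw : G w = Some gw -> fbe x0 <= model x0 w + gw.
Proof. by move=> hw; apply: (FBE_glb x0).1; exists w; rewrite fbe_obj_model hw. Qed.

Lemma FBE_approx x0 eps : 0 < eps -> exists w gw, G w = Some gw /\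
  model x0 w + gw < fbe x0 + eps.
Proof.
move=> he; apply: NNPP => hno.
suff : fbe x0 + eps <= fbe x0 by lra.
apply: (FBE_glb x0).2 => v [w]; rewrite fbe_obj_model.
case hw: (G w) => [gw|] // [<-].
by apply: Rnot_lt_le => hlt; apply: hno; exists w, gw.
Qed.

Lemma FBE_iterate_lb k : r0 + cmin * bnsq (bsub (z k) (x k)) <= fbe (x k).
Proof. by have [gz [hgz [-> _]]] := FBE_at_prox (hT k); exact: model_obj_lb. Qed.

Lemma FBE_iterate_ge_min k : r0 <= fbe (x k).
Proof.
by have := FBE_iterate_lb k; have := cmin_pos; have := bnsq_ge0 (bsub (z k) (x k)); nra.
Qed.

Lemma FBE_iterates_cv : exists l, Un_cv (fun k => fbe (x k)) l.
Proof.
have hlb : has_lb (fun k => fbe (x k)).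
  by exists (- r0) => v [k ->]; rewrite /opp_seq; have := FBE_iterate_ge_min k; lra.
by have [l hl] := decreasing_cv _ FBE_nonincreasing hlb; exists l.
Qed.

(* Statement (iv): telescoping the step bound against the lower bound r0. *)
Lemma iterates_sq_summable :
  exists l, infinite_sum (fun k => bnsq (bsub (x (S k)) (x k))) l.
Proof.
exact: (telescoping_summable cmin_pos (fun k => bnsq_ge0 _) step_sq_le FBE_iterate_ge_min).
Qed.

(* The prox steps z^k - x^k stay bounded, since cmin |z^k - x^k|^2 is at most
   FBE(x^k) - r0 <= FBE(x^0) - r0. *)
Lemma prox_steps_bounded : exists Rz, 0 <= Rz /\ forall k, bnsq (bsub (z k) (x k)) <= Rz.
Proof.
have hc := cmin_pos.
exists ((fbe (x 0%nat) - r0) / cmin).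
suff hb k : bnsq (bsub (z k) (x k)) <= (fbe (x 0%nat) - r0) / cmin.
  by split => //; exact: Rle_trans (bnsq_ge0 _) (hb 0%nat).
have h : cmin * bnsq (bsub (z k) (x k)) <= fbe (x 0%nat) - r0.
  have := decreasing_prop _ _ _ FBE_nonincreasing (Nat.le_0_l k) => /=.
  by have := FBE_iterate_lb k; lra.
have -> : bnsq (bsub (z k) (x k)) = cmin * bnsq (bsub (z k) (x k)) / cmin by field; lra.
by apply: Rmult_le_compat_r => //; apply: Rlt_le; apply: Rinv_0_lt_compat.
Qed.

(* Statement (iii), upper half: at iterates x^k close to xb, the point z^k is
   admissible for FBE(xb), and M(xb, z^k) is close to M(x^k, z^k). *)
Lemma FBE_cluster_le l xb : Un_cv (fun k => fbe (x k)) l -> cluster_point x xb ->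
  fbe xb <= l.
Proof.
move=> hcv hcl; apply: Rnot_lt_le => hlt.
set eps := (fbe xb - l) / 3; have he : 0 < eps by rewrite /eps; lra.
have heps : 3 * eps = fbe xb - l by rewrite /eps; field.
have [K hK] := hcv eps he.
have [Rz [hRz hzx]] := prox_steps_bounded.
have [d [hd hcont]] := @model_cont xb (2 * Rz + 2) eps ltac:(lra) he.
have [k [hk hxk]] := hcl (Rmin d 1) K (Rmin_pos _ _ hd Rlt_0_1).
have [gz [hgz [hUk _]]] := FBE_at_prox (hT k).
have hxk1 : bnsq (bsub (x k) xb) < 1.
  rewrite -bnorm_sq; have := Rmin_r d 1; have := bnorm_ge0 (bsub (x k) xb); nra.
have hzb : bnsq (bsub (z k) xb) <= 2 * Rz + 2.
  by have := bnsq_tri (z k) (x k) xb; have := hzx k; lra.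
have := hcont (x k) (z k) (Rlt_le_trans _ _ _ hxk (Rmin_l d 1)) hzb.
move/Rabs_le_bounds => hclose.
have := FBE_le xb hgz.
have := hK k (elimT leP hk); rewrite /Rdist hUk => hnear.
have := Rle_abs (model (x k) (z k) + gz - l).
lra.
Qed.

(* Statement (iii), lower half: a near-minimizer w for FBE(xb) is admissible
   at x^k, and M(x^k, w) is close to M(xb, w) for x^k close to xb. *)
Lemma FBE_cluster_ge l xb : Un_cv (fun k => fbe (x k)) l -> cluster_point x xb ->
  l <= fbe xb.
Proof.
move=> hcv hcl; apply: Rnot_lt_le => hlt.
set eps := (l - fbe xb) / 2; have he : 0 < eps by rewrite /eps; lra.
have heps : 2 * eps = l - fbe xb by rewrite /eps; field.
have [w [gw [hw hwv]]] := FBE_approx xb he.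
have [d [hd hcont]] := model_cont xb (bnsq_ge0 (bsub w xb)) he.
have [k [_ hxk]] := hcl d 0%nat hd.
have [gz [_ [hUk hmink]]] := FBE_at_prox (hT k).
have := hcont (x k) w hxk (Rle_refl _); move/Rabs_le_bounds => hclose.
have := hmink w gw hw.
have := decreasing_ineq _ _ FBE_nonincreasing hcv k; rewrite hUk.
lra.
Qed.

End BoundedBelow.
End Iterates.
End Model.
Theorem lemma2p5 (N : nat) (n : 'I_N -> nat)
  (f : forall i, vec (n i) -> R) (gf : forall i, vec (n i) -> vec (n i))
  (L gamma : 'I_N -> R) (G : bvec n -> option R)
  (x z : nat -> bvec n) (I : nat -> {set 'I_N}) :
  (1 <= N)%nat ->
  (forall i, is_gradient (f i) (gf i)) ->
  (forall i, 0 < L i) ->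
  (forall i, lipschitz (gf i) (L i)) ->
  proper_fun G -> lsc G ->
  (exists xs, Phi f G xs <> None /\ forall y, ext_le (Phi f G xs) (Phi f G y)) ->
  (forall i, 0 < gamma i /\ gamma i < INR N / L i) ->
  (forall k, in_T gf gamma G (x k) (z k)) ->
  (forall k i, x (S k) i = if i \in I (S k) then z k i else x k i) ->
  (* (i) *)
  (forall i, 0 < (INR N - gamma i * L i) / INR N) /\
  (forall k, FBE f gf gamma G (x (S k)) <=
     FBE f gf gamma G (x k)
     - \big[Rplus/0]_(i < N | i \in I (S k))
         ((INR N - gamma i * L i) / INR N / (2 * gamma i)
          * nsq (vsub (z k i) (x k i)))) /\
  (* (ii) *)
  (forall k, FBE f gf gamma G (x (S k)) <= FBE f gf gamma G (x k)) /\
  (exists Phistar,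
     Un_cv (fun k => FBE f gf gamma G (x k)) Phistar /\
     (forall xs r, (forall y, ext_le (Phi f G xs) (Phi f G y)) ->
        Phi f G xs = Some r -> r <= Phistar) /\
  (* (iii) *)
     (forall xb, cluster_point x xb -> FBE f gf gamma G xb = Phistar)) /\
  (* (iv) *)
  (exists l, infinite_sum (fun k => bnsq (bsub (x (S k)) (x k))) l) /\
  (* (v) *)
  (coercive (Phi f G) ->
     (exists B, forall k, bnorm (x k) <= B) /\
     (exists B, forall k, bnorm (z k) <= B)).
Proof.
move=> hN hgrad hL hlip _ _ [xs [hxs_fin hmin]] hgam hT hupd.
case hxs: (Phi f G xs) hxs_fin => [r0|] // _.
have [l hl] := FBE_iterates_cv hN hgrad hL hlip hgam hT hupd hxs hmin.
split; first exact: (xi_pos hN hL hgam).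
split; first exact: (sufficient_decrease hN hgrad hL hlip hgam hT hupd).
split; first exact: (FBE_nonincreasing hN hgrad hL hlip hgam hT hupd).
split.
  exists l; split => //; split.
  - move=> xs' r hmin' hr; exact: (FBE_limit_ge_min hN hgrad hL hlip hgam hT hmin' hr hl).
  - move=> xb hxb; apply: Rle_antisym.
    + exact: (FBE_cluster_le hN hgrad hL hlip hgam hT hupd hxs hmin hl hxb).
    + exact: (FBE_cluster_ge hN hgrad hL hlip hgam hT hupd hxs hmin hl hxb).
split; first exact: (iterates_sq_summable hN hgrad hL hlip hgam hT hupd hxs hmin).
exact: (iterates_bounded hN hgrad hL hlip hgam hT hupd).
Qed.
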